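(* Let $G$ be an undirected, weighted, connected graph on vertices $1,\dots,n$, and let $H$ be either its adjacency matrix or its Laplacian matrix. Write $H=Q^T\Lambda Q$ with $Q$ a real orthogonal matrix and $\Lambda=\mathrm{diag}(\lambda_1,\dots,\lambda_n)$, $\lambda_1\le\cdots\le\lambda_n$. For real $t$ let $p(t)=|\langle s|e^{itH}|r\rangle|^2$ be the fidelity of state transfer from a sender vertex $s$ to a receiver vertex $r$, and suppose there is perfect state transfer at time $t_0$, i.e. $p(t_0)=1$. For $j=1,\dots,n$ let $q_{j}$ denote the $(j,s)$ entry of $Q$ (the $s$-th entry of the $j$-th orthonormal eigenvector of $H$). Let $h\in\mathbb{R}$ satisfy $|h|<\frac{\pi}{\lambda_n-\lambda_1}$. Then for every $\sigma\in\mathbb{R}$, \[ p(t_0+h)\ \ge\ 1-h^2\sum_{j=1}^n q_{j}^2(\lambda_j-\sigma)^2 . \]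
   Context: For a weighted graph with edge weights $w(j,k)$, the adjacency matrix $A=[a_{jk}]$ has $a_{jk}=w(j,k)$ if $j,k$ are adjacent and $a_{jk}=0$ otherwise; the Laplacian is $L=R-A$ where $R$ is the diagonal matrix of row sums of $A$. $\{|1\rangle,\dots,|n\rangle\}$ is the standard basis of $\mathbb{C}^n$, so $\langle s|e^{itH}|r\rangle$ is the $(s,r)$ entry of $e^{itH}$. *)

From HB Require Import structures.
From mathcomp Require Import all_boot all_order all_algebra.
From mathcomp Require Import all_classical all_reals all_analysis.
Set Implicit Arguments. Unset Strict Implicit. Unset Printing Implicit Defensive.
Import Order.TTheory GRing.Theory Num.Theory.
Local Open Scope ring_scope.

Section Defs.
Variable R : realType.
Variable n : nat.
(* vertices are 'I_n.+1 (a graph with n.+1 >= 1 vertices) *)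

Definition weighted_graph (e : rel 'I_n.+1) (w : 'I_n.+1 -> 'I_n.+1 -> R) : Prop :=
  (forall j k, e j k = e k j) /\ (forall j, ~~ e j j) /\
  (forall j k, w j k = w k j) /\ (forall j k, e j k -> 0 < w j k).

Definition connected_graph (e : rel 'I_n.+1) : Prop :=
  forall j k, connect e j k.

Definition adjacency_mx (e : rel 'I_n.+1) (w : 'I_n.+1 -> 'I_n.+1 -> R) : 'M[R]_n.+1 :=
  \matrix_(j, k) (if e j k then w j k else 0).

Definition laplacian_mx (e : rel 'I_n.+1) (w : 'I_n.+1 -> 'I_n.+1 -> R) : 'M[R]_n.+1 :=
  diag_mx (\row_j (\sum_k adjacency_mx e w j k)) - adjacency_mx e w.

(* For a real matrix H, e^{itH} = sum_k (itH)^k / k!.  Its (s,r) entry has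
   real part  sum_k (-1)^k t^(2k) (H^(2k))_{sr} / (2k)!
   and imaginary part sum_k (-1)^k t^(2k+1) (H^(2k+1))_{sr} / (2k+1)!. *)
Definition expitH_re (H : 'M[R]_n.+1) (t : R) (s r : 'I_n.+1) : R :=
  \big[+%R/0%R]_(0 <= k <oo) ((-1) ^+ k * t ^+ (2 * k) / ((2 * k)`!)%:R * (H ^+ (2 * k)) s r).

Definition expitH_im (H : 'M[R]_n.+1) (t : R) (s r : 'I_n.+1) : R :=
  \big[+%R/0%R]_(0 <= k <oo) ((-1) ^+ k * t ^+ (2 * k).+1 / ((2 * k).+1`!)%:R
                      * (H ^+ (2 * k).+1) s r).

Definition fidelity (H : 'M[R]_n.+1) (s r : 'I_n.+1) (t : R) : R :=
  expitH_re H t s r ^+ 2 + expitH_im H t s r ^+ 2.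

End Defs.

From mathcomp Require Import all_boot all_order all_algebra.
From mathcomp Require Import all_classical all_reals all_analysis.
From mathcomp Require Import ring lra.

(* Write u_j = Q_js and v_j = Q_jr.  By the spectral decomposition
   <s|e^{itH}|r> = sum_j u_j v_j e^{i t lam_j}.  Perfect transfer at t0 is the
   equality case of Cauchy-Schwarz for the unit vectors u and
   (v_j e^{i t0 lam_j})_j, so v_j e^{i t0 lam_j} = g u_j with |g| = 1.  Hence
   p(t0 + h) = |sum_j u_j^2 e^{i h (lam_j - sigma)}|^2 for every sigma, which is
   at least the square of the real part, and cos x >= 1 - x^2/2 concludes. *)

Set Implicit Arguments.
Unset Strict Implicit.
Unset Printing Implicit Defensive.
Import Order.TTheory GRing.Theory Num.Theory.
Import numFieldNormedType.Exports.
Local Open Scope ring_scope.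

Section Trigonometry.
Variable R : realType.

Lemma addr_scale_sin_ge0 (e x : R) : `|e| <= 1 -> 0 <= x -> 0 <= x + e * sin x.
Proof.
move=> e1 x0; set f := fun y : R => y + e * sin y.
have df (y : R) : is_derive y 1 f (1 + e * cos y).
  by apply: is_deriveD; apply: is_deriveZ.
have f_der (y : R) : derivable f y 1 by apply: ex_derive; exact: df.
have f'_ge0 (y : R) : 0 <= f^`()%classic y.
  rewrite derive1E derive_val.
  have : `|e * cos y| <= 1.
    rewrite normrM; apply: le_trans e1; rewrite ler_piMr //.
    by rewrite ler_norml cos_le1 cos_geN1.
  by rewrite ler_norml => /andP[]; lra.
have f_cont : {within `[0, x], continuous f}%classic.
  apply: continuous_subspaceT => y; apply: differentiable_continuous.
  exact/derivable1_diffP.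
have := @ger0_derive1_ndecr R f 0 x (fun y _ => f_der y)
  (fun y _ => f'_ge0 y) f_cont 0 x (le_refl _) x0 (le_refl _).
by rewrite /f sin0 mulr0 addr0.
Qed.

Lemma norm_sin_le (x : R) : `|sin x| <= `|x|.
Proof.
wlog x0 : x / 0 <= x.
  move=> le_x; have [/le_x//|/ltW] := leP 0 x.
  by rewrite -oppr_ge0 => /le_x; rewrite sinN !normrN.
have sin_le : 0 <= x - sin x.
  by rewrite -mulN1r; apply: addr_scale_sin_ge0; rewrite ?normrN1.
have Nx_le : 0 <= x + sin x.
  by rewrite -[sin x]mul1r; apply: addr_scale_sin_ge0; rewrite ?normr1.
by rewrite (ger0_norm x0) ler_norml; apply/andP; split; lra.
Qed.

Lemma cos_ge_1_sub_sqr_half (x : R) : 1 - x ^+ 2 / 2 <= cos x.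
Proof.
have cos_half : cos x = 1 - 2 * sin (x / 2) ^+ 2.
  rewrite {1}(_ : x = (x / 2) *+ 2); last by rewrite -mulr_natr mulfVK.
  by rewrite cos_mulr2n cos2sin2 -mulr_natr; ring.
have : `|sin (x / 2)| ^+ 2 <= `|x / 2| ^+ 2.
  by rewrite lerXn2r ?nnegrE ?norm_sin_le.
rewrite !real_normK ?num_real //.
by rewrite cos_half; lra.
Qed.

End Trigonometry.

Section TrigonometricSums.
Variables (R : realType) (I : finType).
Implicit Types (x y z c v theta phi : I -> R) (a : R).

(* Equality case of Cauchy-Schwarz for x and y + i z. *)
Lemma sum_sqr_eq1_collinear x y z :
  \sum_i x i ^+ 2 = 1 -> \sum_i (y i ^+ 2 + z i ^+ 2) = 1 ->
  (\sum_i x i * y i) ^+ 2 + (\sum_i x i * z i) ^+ 2 = 1 ->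
  forall i, y i = (\sum_j x j * y j) * x i /\ z i = (\sum_j x j * z j) * x i.
Proof.
set a := \sum_j x j * y j; set b := \sum_j x j * z j => x1 yz1 ab1.
have dist0 : \sum_i ((y i - a * x i) ^+ 2 + (z i - b * x i) ^+ 2) = 0.
  have -> : \sum_i ((y i - a * x i) ^+ 2 + (z i - b * x i) ^+ 2)
    = \sum_i (y i ^+ 2 + z i ^+ 2)
      - \sum_i (2 * a * (x i * y i) + 2 * b * (x i * z i))
      + \sum_i (a ^+ 2 + b ^+ 2) * x i ^+ 2.
    by rewrite -sumrB -big_split /=; apply: eq_bigr => i _; ring.
  rewrite yz1 big_split /= -!mulr_sumr -/a -/b x1.
  by transitivity (1 - (a ^+ 2 + b ^+ 2)); [ring | rewrite ab1 subrr].
move=> i; have /eqP := @psumr_eq0P _ _ _ _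
  (fun j _ => addr_ge0 (sqr_ge0 _) (sqr_ge0 _)) dist0 i isT.
by rewrite paddr_eq0 ?sqr_ge0 // !sqrf_eq0 !subr_eq0 => /andP[/eqP -> /eqP ->].
Qed.

Lemma trig_sum_sqr_add_phase x v theta phi :
  \sum_i x i ^+ 2 = 1 -> \sum_i v i ^+ 2 = 1 ->
  (\sum_i x i * (v i * cos (theta i))) ^+ 2
    + (\sum_i x i * (v i * sin (theta i))) ^+ 2 = 1 ->
  (\sum_i x i * (v i * cos (theta i + phi i))) ^+ 2
    + (\sum_i x i * (v i * sin (theta i + phi i))) ^+ 2
  = (\sum_i x i ^+ 2 * cos (phi i)) ^+ 2 + (\sum_i x i ^+ 2 * sin (phi i)) ^+ 2.
Proof.
move=> x1 v1 max1.
have vcs1 : \sum_i ((v i * cos (theta i)) ^+ 2 + (v i * sin (theta i)) ^+ 2) = 1.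
  by rewrite -v1; apply: eq_bigr => i _; rewrite !exprMn -mulrDr cos2Dsin2 mulr1.
have collinear := sum_sqr_eq1_collinear x1 vcs1 max1.
move: max1 collinear.
set a := \sum_i _; set b := \sum_i _ => ab1 collinear.
set C := \sum_i x i ^+ 2 * cos (phi i); set S := \sum_i x i ^+ 2 * sin (phi i).
have -> : \sum_i x i * (v i * cos (theta i + phi i)) = a * C - b * S.
  rewrite /C /S !mulr_sumr -sumrB; apply: eq_bigr => i _.
  have [vc vs] := collinear i; rewrite cosD.
  transitivity (x i * ((v i * cos (theta i)) * cos (phi i)
                       - (v i * sin (theta i)) * sin (phi i))); first by ring.
  by rewrite vc vs; ring.
have -> : \sum_i x i * (v i * sin (theta i + phi i)) = b * C + a * S.
  rewrite /C /S !mulr_sumr -big_split /=; apply: eq_bigr => i _.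
  have [vc vs] := collinear i; rewrite sinD.
  transitivity (x i * ((v i * sin (theta i)) * cos (phi i)
                       + (v i * cos (theta i)) * sin (phi i))); first by ring.
  by rewrite vc vs; ring.
transitivity ((a ^+ 2 + b ^+ 2) * (C ^+ 2 + S ^+ 2)); first by ring.
by rewrite ab1 mul1r.
Qed.

Lemma trig_sum_sqr_shift c x a :
  (\sum_i c i * cos (x i - a)) ^+ 2 + (\sum_i c i * sin (x i - a)) ^+ 2
  = (\sum_i c i * cos (x i)) ^+ 2 + (\sum_i c i * sin (x i)) ^+ 2.
Proof.
set C := \sum_i c i * cos (x i); set S := \sum_i c i * sin (x i).
have -> : \sum_i c i * cos (x i - a) = C * cos a + S * sin a.
  rewrite /C /S !mulr_suml -big_split /=; apply: eq_bigr => i _.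
  by rewrite cosB; ring.
have -> : \sum_i c i * sin (x i - a) = S * cos a - C * sin a.
  rewrite /C /S !mulr_suml -sumrB; apply: eq_bigr => i _.
  by rewrite sinB; ring.
transitivity ((C ^+ 2 + S ^+ 2) * (cos a ^+ 2 + sin a ^+ 2)); first by ring.
by rewrite cos2Dsin2 mulr1.
Qed.

Lemma trig_sum_sqr_ge c x :
  (forall i, 0 <= c i) -> \sum_i c i = 1 ->
  1 - \sum_i c i * x i ^+ 2
    <= (\sum_i c i * cos (x i)) ^+ 2 + (\sum_i c i * sin (x i)) ^+ 2.
Proof.
move=> c_ge0 c1; set D := \sum_i c i * x i ^+ 2; set C := \sum_i c i * cos (x i).
have C_ge : 1 - D / 2 <= C.
  have -> : 1 - D / 2 = \sum_i c i * (1 - x i ^+ 2 / 2).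
    rewrite /D mulr_suml -{1}c1 -sumrB; apply: eq_bigr => i _; ring.
  by apply: ler_sum => i _; rewrite ler_wpM2l ?cos_ge_1_sub_sqr_half.
have S2_ge0 := sqr_ge0 (\sum_i c i * sin (x i)).
have [bound_ge0|bound_lt0] := leP 0 (1 - D / 2); last first.
  by have := sqr_ge0 C; lra.
have := ler_pM bound_ge0 bound_ge0 C_ge C_ge; rewrite -!expr2.
have -> : (1 - D / 2) ^+ 2 = 1 - D + D ^+ 2 / 4 by field.
by have := sqr_ge0 D; lra.
Qed.

End TrigonometricSums.

Section SpectralDecomposition.
Variables (R : comUnitRingType) (n : nat).
Implicit Types (Q : 'M[R]_n.+1) (lam : 'I_n.+1 -> R).

Lemma orthogonal_col_sqr_sum Q a : Q^T *m Q = 1%:M -> \sum_j Q j a ^+ 2 = 1.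
Proof.
move=> /(congr1 (fun M : 'M[R]_n.+1 => M a a)); rewrite !mxE eqxx mulr1n => <-.
by apply: eq_bigr => j _; rewrite !mxE expr2.
Qed.

Lemma spectral_pow Q lam k : Q^T *m Q = 1%:M ->
  (Q^T *m diag_mx (\row_j lam j) *m Q) ^+ k
    = Q^T *m diag_mx (\row_j lam j ^+ k) *m Q.
Proof.
move=> QtQ; have QQt := mulmx1C QtQ; elim: k => [|k IHk].
  rewrite expr0 (_ : \row_j lam j ^+ 0 = const_mx 1); last first.
    by apply/rowP => j; rewrite !mxE expr0.
  by rewrite diag_const_mx mulmx1 QtQ.
rewrite exprSr IHk -mulmxE -!mulmxA (mulmxA Q) QQt mul1mx !mulmxA.
rewrite -(mulmxA Q^T) mulmx_diag; congr (_ *m diag_mx _ *m _).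
by apply/rowP => j; rewrite !mxE exprSr.
Qed.

Lemma spectral_pow_entry Q lam k s r : Q^T *m Q = 1%:M ->
  ((Q^T *m diag_mx (\row_j lam j) *m Q) ^+ k) s r
    = \sum_j Q j s * Q j r * lam j ^+ k.
Proof.
move=> QtQ; rewrite spectral_pow // mxE; apply: eq_bigr => j _.
by rewrite mul_mx_diag !mxE; ring.
Qed.

End SpectralDecomposition.

Section SpectralFidelity.
Local Open Scope classical_set_scope.
Variables (R : realType) (n : nat).
Implicit Types (H Q : 'M[R]_n.+1) (c lam : 'I_n.+1 -> R).

Lemma cvg_weighted_sum (u : 'I_n.+1 -> nat -> R) (l c : 'I_n.+1 -> R) :
  (forall j, u j @ \oo --> l j) ->
  (fun N => \sum_j c j * u j N) @ \oo --> \sum_j c j * l j.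
Proof.
move=> ul; apply: (cvg_big add_continuous) => j _.
exact: cvgM (cvg_cst _) (ul j).
Qed.

Lemma expitH_re_spectral H c lam s r t :
  (forall k, (H ^+ k) s r = \sum_j c j * lam j ^+ k) ->
  expitH_re H t s r = \sum_j c j * cos (t * lam j).
Proof.
move=> Hk; apply: cvg_lim => //; rewrite /series /=.
have -> : (fun N => \sum_(0 <= k < N) ((-1) ^+ k * t ^+ (2 * k) / ((2 * k)`!)%:R
                                     * (H ^+ (2 * k)) s r))
  = (fun N => \sum_j c j * series (cos_coeff' (t * lam j)) N).
  apply/funext => N; under eq_bigr do rewrite Hk mulr_sumr.
  rewrite exchange_big; apply: eq_bigr => j _; rewrite mulr_sumr.
  by apply: eq_bigr => k _; rewrite /cos_coeff' -exprnP mul2n exprMn; ring.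
by apply: cvg_weighted_sum => j; exact: cvg_cos_coeff'.
Qed.

Lemma expitH_im_spectral H c lam s r t :
  (forall k, (H ^+ k) s r = \sum_j c j * lam j ^+ k) ->
  expitH_im H t s r = \sum_j c j * sin (t * lam j).
Proof.
move=> Hk; apply: cvg_lim => //; rewrite /series /=.
have -> : (fun N => \sum_(0 <= k < N) ((-1) ^+ k * t ^+ (2 * k).+1 / ((2 * k).+1`!)%:R
                                     * (H ^+ (2 * k).+1) s r))
  = (fun N => \sum_j c j * series (sin_coeff' (t * lam j)) N).
  apply/funext => N; under eq_bigr do rewrite Hk mulr_sumr.
  rewrite exchange_big; apply: eq_bigr => j _; rewrite mulr_sumr.
  by apply: eq_bigr => k _; rewrite /sin_coeff' -exprnP mul2n exprMn; ring.
by apply: cvg_weighted_sum => j; exact: cvg_sin_coeff'.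
Qed.

Lemma fidelity_spectral Q lam s r t : Q^T *m Q = 1%:M ->
  fidelity (Q^T *m diag_mx (\row_j lam j) *m Q) s r t
  = (\sum_j Q j s * (Q j r * cos (t * lam j))) ^+ 2
    + (\sum_j Q j s * (Q j r * sin (t * lam j))) ^+ 2.
Proof.
move=> QtQ; have entry k := spectral_pow_entry lam k s r QtQ.
rewrite /fidelity (expitH_re_spectral _ entry) (expitH_im_spectral _ entry).
by under eq_bigr do rewrite -mulrA; under [in X in _ + X]eq_bigr do rewrite -mulrA.
Qed.

End SpectralFidelity.

Theorem theorem2p2 (R : realType) (n : nat)
  (e : rel 'I_n.+1) (w : 'I_n.+1 -> 'I_n.+1 -> R)
  (Hgraph : weighted_graph e w) (Hconn : connected_graph e)
  (H : 'M[R]_n.+1)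
  (HH : H = adjacency_mx e w \/ H = laplacian_mx e w)
  (Q : 'M[R]_n.+1) (lam : 'I_n.+1 -> R)
  (HQorth : Q^T *m Q = 1%:M)
  (Hlam_sorted : forall j k : 'I_n.+1, (j <= k)%N -> lam j <= lam k)
  (Hdecomp : H = Q^T *m diag_mx (\row_j lam j) *m Q)
  (s r : 'I_n.+1) (t0 : R)
  (HPST : fidelity H s r t0 = 1)
  (h : R) (Hh : `|h| < pi / (lam ord_max - lam ord0)) :
  forall sigma : R,
    fidelity H s r (t0 + h) >=
      1 - h ^+ 2 * \sum_(j < n.+1) (Q j s) ^+ 2 * (lam j - sigma) ^+ 2.
Proof.
move=> sigma; subst H.
rewrite fidelity_spectral // in HPST; rewrite fidelity_spectral //.
have split_time (f : R -> R) :
    \sum_j Q j s * (Q j r * f ((t0 + h) * lam j))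
    = \sum_j Q j s * (Q j r * f (t0 * lam j + h * lam j)).
  by apply: eq_bigr => j _; rewrite mulrDl.
rewrite (split_time cos) (split_time sin).
rewrite (trig_sum_sqr_add_phase _ (orthogonal_col_sqr_sum s HQorth)
  (orthogonal_col_sqr_sum r HQorth) HPST).
rewrite -(trig_sum_sqr_shift _ _ (h * sigma)).
have -> : h ^+ 2 * \sum_j Q j s ^+ 2 * (lam j - sigma) ^+ 2
        = \sum_j Q j s ^+ 2 * (h * lam j - h * sigma) ^+ 2.
  by rewrite mulr_sumr; apply: eq_bigr => j _; ring.
by apply: trig_sum_sqr_ge => [j|]; rewrite ?sqr_ge0 ?orthogonal_col_sqr_sum.
Qed.
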